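(* Let $G$ be a tournament and $v_1,\ldots,v_n$ a matching ordering of $G$. Suppose $\pi \in S_n$ is a permutation such that $v_{\pi(1)},\ldots,v_{\pi(n)}$ is also a matching ordering of $G$. Then $\{1,\ldots,n\}$ can be partitioned into sets $X_1,\ldots,X_r$, each a set of consecutive integers, such that: (1) $\pi = \sigma_1\sigma_2\cdots\sigma_r$, where for each $i$, $\sigma_i$ is one of $\sigma_{X_i}$, $\sigma_{X_i}^{-1}$, or $\tau_{X_i}$ (the last only when $|X_i|=4$); (2) for each $i$, $V_i=\{v_x : x\in X_i\}$ is a homogeneous set of $G$; (3) for each $i$, the subtournament $H_i$ induced on $V_i$ is either transitive or isomorphic to $P_{|V_i|}$; moreover, writing $X_i=\{b,\dots,a\}$ and $m=|X_i|$, the ordering $v_b,v_{b+1},\dots,v_a$ of $V_i$ satisfies: if $\sigma_i=\sigma_{X_i}$ then $H_i$ is transitive or isomorphic to $P_m$ and this ordering is $\pi_2 H_i$; if $\sigma_i=\sigma_{X_i}^{-1}$ then $H_i$ is transitive or isomorphic to $P_m$ and this ordering is $\pi_1 H_i$; if $\sigma_i=\tau_{X_i}$ then $H_i$ is isomorphic to $P_4$ and this ordering is $\pi_2 H_i$ or $\pi_2\pi_1 H_i$.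
   Context: A tournament is a finite, non-null, loopless directed graph in which for any two distinct vertices $u,v$ there is exactly one edge with both ends in $\{u,v\}$; write $u\to v$ for the edge from $u$ to $v$. A homogeneous set of $G$ is a set $X\subseteq V(G)$ such that each vertex outside $X$ either has edges to all of $X$ or edges from all of $X$. Given an ordering $v_1,\dots,v_n$ of $V(G)$, a backedge is an edge $v_j\to v_i$ with $j>i$; the ordering is a matching ordering if every vertex is the head or tail of at most one backedge. A tournament is transitive if it has an ordering $v_1,\dots,v_n$ with $v_i\to v_j$ whenever $i<j$ (its standard ordering). $P_m$ is the tournament on $v_1,\dots,v_m$ with $v_i\to v_j$ if $j-i\ge2$ and $v_{i+1}\to v_i$ for $1\le i\le m-1$; for $m\ne3$ such a defining ordering is unique. For $X=\{b,b+1,\dots,a\}$: if $|X|$ is odd, $\sigma_X$ is the cycle $(b\ b{+}2\ b{+}4\ \cdots\ a{-}2\ a\ a{-}1\ a{-}3\ \cdots\ b{+}1)$; if $|X|$ is even, $\sigma_X=(b\ b{+}2\ \cdots\ a{-}1\ a\ a{-}2\ \cdots\ b{+}1)$ (so $\sigma_X$ is the identity if $|X|=1$ and the transposition $(b\ a)$ if $|X|=2$), regarded as a permutation of $\{1,\dots,n\}$ fixing everything outside $X$; if $|X|=4$, $\tau_X=(b\ b{+}2)(b{+}1\ b{+}3)$. For a tournament $H$ on $m$ vertices that is transitive or isomorphic to $P_m$, let $u_1,\dots,u_m$ be its standard ordering (if transitive) or its defining $P_m$ ordering (if $m\ne3$), or some defining $P_3$ ordering (if $m=3$); then $\pi_1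 H$ is the ordering $u_2,u_1,u_4,u_3,\dots$ (swap $u_{2j-1},u_{2j}$ for all $j\le \lfloor m/2\rfloor$), $\pi_2 H$ is the ordering $u_1,u_3,u_2,u_5,u_4,\dots$ (swap $u_{2j},u_{2j+1}$ for all $j\le \lfloor m/2\rfloor-1$... i.e. for $1\le j$ with $2j+1\le m$), and for $H\cong P_4$, $\pi_2\pi_1 H$ is the ordering $u_2,u_4,u_1,u_3$. When $m=2$, any ordering counts as $\pi_1H$, $\pi_2H$. *)

From HB Require Import structures.
From Stdlib Require List.
From mathcomp Require Import all_boot all_fingroup.

Set Implicit Arguments.
Unset Strict Implicit.
Unset Printing Implicit Defensive.

(* Conventions: positions are 0-indexed, i.e. v_1,...,v_n of the paper is
   v : 'I_n -> T with v_{i} = v (i-1). *)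

Definition tournament (T : finType) (e : rel T) : Prop :=
  0 < #|T| /\ (forall u, ~~ e u u) /\
  (forall u w, u != w -> addb (e u w) (e w u)).

Definition matching_ordering (T : finType) (e : rel T) (n : nat)
    (v : 'I_n -> T) : Prop :=
  bijective v /\
  forall k : 'I_n,
    #|[set l : 'I_n | ((l < k) && e (v k) (v l)) || ((k < l) && e (v l) (v k))]|
      <= 1.

Definition homogeneous (T : finType) (e : rel T) (X : {set T}) : Prop :=
  forall y, y \notin X ->
    (forall x, x \in X -> e y x) \/ (forall x, x \in X -> e x y).

Definition ordering_of (T : finType) (V : {set T}) (m : nat) (u : 'I_m -> T) :
  Prop := injective u /\ [set u k | k : 'I_m] = V.

Definition std_transitive (T : finType) (e : rel T) (m : nat) (u : 'I_m -> T) :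
  Prop := forall i j : 'I_m, i < j -> e (u i) (u j).

Definition P_ordering (T : finType) (e : rel T) (m : nat) (u : 'I_m -> T) :
  Prop := forall i j : 'I_m, e (u i) (u j) = (i.+2 <= j) || (i == j.+1 :> nat).

Definition at_ (T : Type) (n : nat) (f : 'I_n -> T) (k : nat) : option T :=
  omap f (insub k : option 'I_n).

(* index maps (0-indexed) realizing pi_1, pi_2 and pi_2 pi_1:
   the ordering pi_x H is  k |-> u_(swap k)  for k < m *)
Definition swap1 (m k : nat) : nat :=
  if odd k then k.-1 else if k.+1 < m then k.+1 else k.
Definition swap2 (m k : nat) : nat :=
  if odd k then (if k.+1 < m then k.+1 else k)
  else (if 0 < k then k.-1 else k).
Definition swap21 (k : nat) : nat := nth k [:: 1; 3; 0; 2] k.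

(* sigma_X for X = {b, ..., b+m-1}: the cycle
   (b b+2 b+4 ... (evens increasing) ... (odds decreasing) ... b+1),
   written as the cyclic sequence; path.next/prev give the permutation
   and its inverse (identity outside X). *)
Definition sigma_seq (b m : nat) : seq nat :=
  [seq b + 2 * i | i <- iota 0 (m.+1)./2] ++
  rev [seq b + 2 * i + 1 | i <- iota 0 m./2].
Definition sigma_fun (b m : nat) (x : nat) : nat := next (sigma_seq b m) x.
Definition sigma_inv_fun (b m : nat) (x : nat) : nat := prev (sigma_seq b m) x.
(* tau_X = (b b+2)(b+1 b+3) *)
Definition tau_fun (b : nat) (x : nat) : nat :=
  if (b <= x) && (x < b + 4) then b + (x - b + 2) %% 4 else x.

Inductive skind := KSig | KSigInv | KTau.

(* a block X = {bstart, ..., bstart + bsize - 1} together with the choice of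
   sigma_i among sigma_X, sigma_X^{-1}, tau_X *)
Record block := Block { bstart : nat; bsize : nat; bkind : skind }.

Definition in_block (B : block) (x : nat) : bool :=
  (bstart B <= x) && (x < bstart B + bsize B).

Definition block_fun (B : block) : nat -> nat :=
  match bkind B with
  | KSig => sigma_fun (bstart B) (bsize B)
  | KSigInv => sigma_inv_fun (bstart B) (bsize B)
  | KTau => tau_fun (bstart B)
  end.

Definition block_set (T : finType) (n : nat) (v : 'I_n -> T) (B : block) :
  {set T} := v @: [set j : 'I_n | in_block B j].

(* condition (3) (and the size restriction for tau in (1)) *)
Definition block_cond (T : finType) (e : rel T) (n : nat) (v : 'I_n -> T)
    (B : block) : Prop :=
  let b := bstart B in let m := bsize B in
  match bkind B with
  | KSig => exists u : 'I_m -> T,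
      ordering_of (block_set v B) u /\
      (std_transitive e u \/ P_ordering e u) /\
      (forall k, k < m -> at_ v (b + k) = at_ u (swap2 m k))
  | KSigInv => exists u : 'I_m -> T,
      ordering_of (block_set v B) u /\
      (std_transitive e u \/ P_ordering e u) /\
      (forall k, k < m -> at_ v (b + k) = at_ u (swap1 m k))
  | KTau => m = 4 /\ exists u : 'I_m -> T,
      ordering_of (block_set v B) u /\ P_ordering e u /\
      ((forall k, k < m -> at_ v (b + k) = at_ u (swap2 m k)) \/
       (forall k, k < m -> at_ v (b + k) = at_ u (swap21 k)))
  end.

From Stdlib Require List.
From mathcomp Require Import all_boot all_fingroup zify.

Set Implicit Arguments.
Unset Strict Implicit.
Unset Printing Implicit Defensive.

(* Call two vertices inverted when the two orderings put them in different
   orders.  The edge between an inverted pair is a backedge of exactly one of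
   the two orderings, so by the matching condition every vertex has at most
   two inverted partners, and no three vertices are pairwise inverted.
   Scanning from the left, the first position [b] not covered yet starts a
   block: these two constraints force [pi] to follow the pattern of sigma_X,
   sigma_X^-1 or tau_X on an interval starting at [b], which [pi] then maps
   onto itself.  Inside a block the inverted pairs form a path (a 4-cycle for
   tau_X) whose consecutive edges alternate in direction, which makes the
   block transitive or a P_m.  Finally, in a block of size at least two every
   vertex has an inverted partner, hence no backedge to the outside: the block
   is homogeneous. *)

Ltac case_ifs_lia := repeat match goal with
  | |- context [if ?c then _ else _] =>
      lazymatch c with context [if _ then _ else _] => fail
      | _ => case: (boolP c) => ? end
  end; lia.

(* The maps sigma_X, sigma_X^-1 and tau_X acting on offsets r = x - b. *)
Definition sigma_off (m r : nat) : nat :=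
  if odd r then (if r == 1 then 0 else r - 2)
  else (if r.+2 < m then r.+2 else if r.+1 < m then r.+1 else r.-1).
Definition sigma_inv_off (m r : nat) : nat :=
  if r == 0 then (if 1 < m then 1 else 0)
  else if odd r then (if r.+2 < m then r.+2 else if r.+1 < m then r.+1 else r.-1)
  else r - 2.
Definition tau_off (r : nat) : nat := (r + 2) %% 4.

Lemma sigma_off_lt m r : r < m -> sigma_off m r < m.
Proof. rewrite /sigma_off; case_ifs_lia. Qed.
Lemma sigma_inv_off_lt m r : r < m -> sigma_inv_off m r < m.
Proof. rewrite /sigma_inv_off; case_ifs_lia. Qed.
Lemma sigma_offK m r : r < m -> sigma_inv_off m (sigma_off m r) = r.
Proof. rewrite /sigma_off /sigma_inv_off; case_ifs_lia. Qed.
Lemma sigma_inv_offK m r : r < m -> sigma_off m (sigma_inv_off m r) = r.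
Proof. rewrite /sigma_off /sigma_inv_off; case_ifs_lia. Qed.
Lemma tau_off_lt r : tau_off r < 4.
Proof. rewrite /tau_off; lia. Qed.
Lemma tau_offK r : r < 4 -> tau_off (tau_off r) = r.
Proof. rewrite /tau_off; lia. Qed.

Lemma swap1_lt m r : r < m -> swap1 m r < m.
Proof. rewrite /swap1; case_ifs_lia. Qed.
Lemma swap2_lt m r : r < m -> swap2 m r < m.
Proof. rewrite /swap2; case_ifs_lia. Qed.
Lemma swap1K m r : r < m -> swap1 m (swap1 m r) = r.
Proof. rewrite /swap1; case_ifs_lia. Qed.
Lemma swap2K m r : r < m -> swap2 m (swap2 m r) = r.
Proof. rewrite /swap2; case_ifs_lia. Qed.

Definition swap21_inv (k : nat) : nat := nth k [:: 2; 0; 3; 1] k.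

Lemma swap21_bij k : k < 4 ->
  [/\ swap21_inv k < 4, swap21 k < 4, swap21_inv (swap21 k) = k
    & swap21 (swap21_inv k) = k].
Proof. by case: k => [|[|[|[|k]]]]. Qed.

Definition inverted_by (f : nat -> nat) (a c : nat) : bool :=
  ((a < c) && (f c < f a)) || ((c < a) && (f a < f c)).

(* The inversion graph of [f] on [0, m) is the path [g 0 -- ... -- g (m-1)],
   and the comparison of neighbours alternates along it. *)
Record path_shape (m : nat) (g f : nat -> nat) : Prop := PathShape {
  path_lt : forall i, i < m -> g i < m;
  pathK : forall i, i < m -> g (g i) = i;
  path_adj : forall i, i.+1 < m -> inverted_by f (g i) (g i.+1);
  path_far : forall i j, i.+2 <= j -> j < m -> g i < g j /\ f (g i) < f (g j);
  path_alt : forall i, i.+2 < m -> (g i < g i.+1) = ~~ (g i.+1 < g i.+2) }.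

Lemma swap2_path_shape m : path_shape m (swap2 m) (sigma_inv_off m).
Proof.
split; [exact: swap2_lt | exact: swap2K | | |] => *;
  rewrite /inverted_by /swap2 /sigma_inv_off; case_ifs_lia.
Qed.

Lemma swap1_path_shape m : path_shape m (swap1 m) (sigma_off m).
Proof.
split; [exact: swap1_lt | exact: swap1K | | |] => *;
  rewrite /inverted_by /swap1 /sigma_off; case_ifs_lia.
Qed.

(* Offset of the [i]-th entry of [sigma_seq], and its inverse. *)
Definition sigma_seq_off (m i : nat) : nat :=
  if i < (m.+1) %/ 2 then 2 * i else 2 * (m %/ 2 - 1 - (i - (m.+1) %/ 2)) + 1.
Definition sigma_seq_index (m r : nat) : nat :=
  if odd r then (m.+1) %/ 2 + (m %/ 2 - 1 - r %/ 2) else r %/ 2.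

Lemma sigma_seq_off_lt m i : i < m -> sigma_seq_off m i < m.
Proof. rewrite /sigma_seq_off; case_ifs_lia. Qed.
Lemma sigma_seq_index_lt m r : r < m -> sigma_seq_index m r < m.
Proof. rewrite /sigma_seq_index; case_ifs_lia. Qed.
Lemma sigma_seq_indexK m r : r < m -> sigma_seq_off m (sigma_seq_index m r) = r.
Proof. rewrite /sigma_seq_off /sigma_seq_index; case_ifs_lia. Qed.
Lemma sigma_seq_off_inj m i j :
  i < m -> j < m -> sigma_seq_off m i = sigma_seq_off m j -> i = j.
Proof. rewrite /sigma_seq_off; case_ifs_lia. Qed.
Lemma sigma_off_seq m i : i < m ->
  sigma_off m (sigma_seq_off m i) = sigma_seq_off m (if i.+1 < m then i.+1 else 0).
Proof. rewrite /sigma_seq_off /sigma_off; case_ifs_lia. Qed.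

Lemma size_sigma_seq b m : size (sigma_seq b m) = m.
Proof. rewrite /sigma_seq size_cat size_rev !size_map !size_iota -!divn2; lia. Qed.

Lemma nth_sigma_seq b m i : i < m -> nth 0 (sigma_seq b m) i = b + sigma_seq_off m i.
Proof.
move=> im; rewrite /sigma_seq nth_cat size_map size_iota -!divn2 /sigma_seq_off.
case: ifP => h1.
  by rewrite (nth_map 0) ?size_iota -?divn2 // nth_iota ?add0n // -?divn2.
rewrite nth_rev size_map size_iota -?divn2; last lia.
rewrite (nth_map 0) ?size_iota -?divn2; last lia.
rewrite nth_iota -?divn2; lia.
Qed.

Lemma sigma_seq_uniq b m : uniq (sigma_seq b m).
Proof.
apply/(uniqP 0) => i j; rewrite !inE size_sigma_seq => im jm.
by rewrite !nth_sigma_seq // => /addnI /(sigma_seq_off_inj im jm).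
Qed.

Lemma mem_sigma_seq b m x : (x \in sigma_seq b m) = (b <= x < b + m).
Proof.
apply/idP/idP.
  move/(nthP 0) => [i]; rewrite size_sigma_seq => im <-.
  rewrite nth_sigma_seq //; have := sigma_seq_off_lt im; lia.
move=> h; have r_lt : x - b < m by lia.
have -> : x = nth 0 (sigma_seq b m) (sigma_seq_index m (x - b)).
  by rewrite nth_sigma_seq ?sigma_seq_index_lt // sigma_seq_indexK //; lia.
by apply: mem_nth; rewrite size_sigma_seq sigma_seq_index_lt.
Qed.

Lemma sigma_fun_in b m x : b <= x < b + m -> sigma_fun b m x = b + sigma_off m (x - b).
Proof.
move=> hx; have r_lt : x - b < m by lia.
set i := sigma_seq_index m (x - b).
have im : i < m by exact: sigma_seq_index_lt.
have xE : x = nth 0 (sigma_seq b m) i by rewrite nth_sigma_seq // sigma_seq_indexK //; lia.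
have ix : index x (sigma_seq b m) = i.
  by rewrite xE index_uniq ?size_sigma_seq ?sigma_seq_uniq.
rewrite /sigma_fun next_nth mem_sigma_seq hx ix.
rewrite (_ : x - b = sigma_seq_off m i) ?sigma_off_seq ?sigma_seq_indexK //.
have sz := size_sigma_seq b m.
case E: (sigma_seq b m) sz => [|y p] /= sz; first lia.
case: ifP => hi.
  rewrite (set_nth_default 0); last lia.
  by rewrite -[nth 0 p i]/(nth 0 (y :: p) i.+1) -E nth_sigma_seq.
rewrite nth_default; last lia.
by rewrite -[y]/(nth 0 (y :: p) 0) -E nth_sigma_seq //; lia.
Qed.

Lemma sigma_inv_fun_in b m x :
  b <= x < b + m -> sigma_inv_fun b m x = b + sigma_inv_off m (x - b).
Proof.
move=> hx; have r_lt : x - b < m by lia.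
have y_in : b <= b + sigma_inv_off m (x - b) < b + m.
  by have := sigma_inv_off_lt r_lt; lia.
have Hx : sigma_fun b m (b + sigma_inv_off m (x - b)) = x.
  by rewrite sigma_fun_in // addKn sigma_inv_offK //; lia.
by rewrite /sigma_inv_fun -{1}Hx /sigma_fun (prev_next (sigma_seq_uniq b m)).
Qed.

Definition block_off (K : skind) (m : nat) : nat -> nat :=
  match K with KSig => sigma_off m | KSigInv => sigma_inv_off m | KTau => tau_off end.
Definition block_off_inv (K : skind) (m : nat) : nat -> nat :=
  match K with KSig => sigma_inv_off m | KSigInv => sigma_off m | KTau => tau_off end.

Definition tau_sized (K : skind) (m : nat) : Prop := K = KTau -> m = 4.

Lemma block_off_lt K m r : tau_sized K m -> r < m -> block_off K m r < m.
Proof.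
case: K => /= h hr; [exact: sigma_off_lt | exact: sigma_inv_off_lt |].
by rewrite (h erefl); exact: tau_off_lt.
Qed.
Lemma block_off_inv_lt K m r : tau_sized K m -> r < m -> block_off_inv K m r < m.
Proof.
case: K => /= h hr; [exact: sigma_inv_off_lt | exact: sigma_off_lt |].
by rewrite (h erefl); exact: tau_off_lt.
Qed.
Lemma block_off_invK K m r : tau_sized K m -> r < m ->
  block_off K m (block_off_inv K m r) = r.
Proof.
case: K => /= h hr; [exact: sigma_inv_offK | exact: sigma_offK |].
by rewrite tau_offK // -(h erefl).
Qed.

Lemma block_fun_out B x :
  tau_sized (bkind B) (bsize B) -> ~~ in_block B x -> block_fun B x = x.
Proof.
case: B => b m K; rewrite /block_fun /in_block /=.
case: K => /= hK hx; rewrite /sigma_fun /sigma_inv_fun ?next_nth ?prev_nth.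
- by rewrite mem_sigma_seq (negbTE hx).
- by rewrite mem_sigma_seq (negbTE hx).
- by rewrite /tau_fun -(hK erefl) (negbTE hx).
Qed.

Lemma block_fun_in B x : tau_sized (bkind B) (bsize B) -> in_block B x ->
  block_fun B x = bstart B + block_off (bkind B) (bsize B) (x - bstart B).
Proof.
case: B => b m K; rewrite /block_fun /in_block /=.
case: K => /= hK hx; [exact: sigma_fun_in | exact: sigma_inv_fun_in |].
by move: hx; rewrite /tau_fun (hK erefl) => ->.
Qed.

Definition kind_of (s : bool) : skind := if s then KSigInv else KSig.

Lemma tau_sized_kind_of s m : tau_sized (kind_of s) m.
Proof. by case: s. Qed.

(* The pattern of [sigma_X^-1] ([s = true]) or [sigma_X] ([s = false]) on the
   offsets that are not near the top end [m] of the block. *)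
Definition chain_off (s : bool) (r : nat) : nat :=
  if s then (if r == 0 then 1 else if odd r then r.+2 else r - 2)
  else (if odd r then (if r == 1 then 0 else r - 2) else r.+2).

Lemma chain_off_step s R : s = odd R -> s || (2 <= R) -> 1 <= R ->
  chain_off s R = R.+2 /\ chain_off s R.+1 = R - 1.
Proof. move=> -> h1 h2; rewrite /chain_off; case_ifs_lia. Qed.

Lemma block_off_chain_end1 s R r : s = odd R -> s || (2 <= R) -> 1 <= R -> r <= R ->
  block_off (kind_of s) R.+1 r = if r == R then R - 1 else chain_off s r.
Proof.
move=> -> h1 h2 h3; rewrite /kind_of /chain_off.
case hR: (odd R) h1 => /= *; rewrite /sigma_off /sigma_inv_off; case_ifs_lia.
Qed.

Lemma block_off_chain_end2 s R r : s = odd R -> s || (2 <= R) -> 1 <= R -> r <= R.+1 ->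
  block_off (kind_of s) R.+2 r =
    if r == R then R.+1 else if r == R.+1 then R - 1 else chain_off s r.
Proof.
move=> -> h1 h2 h3; rewrite /kind_of /chain_off.
case hR: (odd R) h1 => /= *; rewrite /sigma_off /sigma_inv_off; case_ifs_lia.
Qed.

(* Old positions are the naturals [x < n]; the new ordering has old position
   [q k] at new position [k], and [qi] is the inverse of [q]. *)
Section Inversions.
Set Default Proof Using "All".
Variables (n : nat) (q qi : nat -> nat) (E : rel nat).
Hypothesis q_lt : forall k, k < n -> q k < n.
Hypothesis qi_lt : forall y, y < n -> qi y < n.
Hypothesis qiK : forall y, y < n -> q (qi y) = y.
Hypothesis qK : forall k, k < n -> qi (q k) = k.
Hypothesis E_tournament : forall x y, x < n -> y < n -> x != y -> E x y = ~~ E y x.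
Hypothesis E_irrefl : forall x, x < n -> ~~ E x x.

(* [p] gives the position of a vertex in the ordering considered: [backedge id]
   refers to the old ordering and [backedge qi] to the new one. *)
Definition backedge (p : nat -> nat) (x y : nat) : bool :=
  (p y < p x) && E x y || (p x < p y) && E y x.

Hypothesis backedge_id_uniq : forall x y z, x < n -> y < n -> z < n ->
  backedge id x y -> backedge id x z -> y = z.
Hypothesis backedge_qi_uniq : forall x y z, x < n -> y < n -> z < n ->
  backedge qi x y -> backedge qi x z -> y = z.

Local Notation inverted := (inverted_by qi).

Lemma qi_inj x y : x < n -> y < n -> qi x = qi y -> x = y.
Proof. by move=> xn yn h; rewrite -(qiK xn) -(qiK yn) h. Qed.

Lemma q_inj k l : k < n -> l < n -> q k = q l -> k = l.
Proof. by move=> kn ln h; rewrite -(qK kn) -(qK ln) h. Qed.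

Lemma inverted_neq x y : inverted x y -> x != y.
Proof. rewrite /inverted_by => /orP[] /andP[h _]; apply/eqP => e; subst; lia. Qed.

Lemma invertedC x y : inverted x y = inverted y x.
Proof. by rewrite /inverted_by orbC. Qed.

Lemma backedgeC p x y : backedge p x y = backedge p y x.
Proof. by rewrite /backedge orbC. Qed.

Lemma E_backedge x y : x < n -> y < n -> x != y -> E x y = (x < y) (+) backedge id x y.
Proof.
move=> xn yn nxy; rewrite /backedge /=; case: (ltngtP x y) => h /=.
- exact: E_tournament.
- by rewrite orbF.
- by move: nxy; rewrite h eqxx.
Qed.

(* The two orderings compare [x] and [y] differently, so the edge between
   them is a backedge of exactly one of them. *)
Lemma inverted_backedge x y : x < n -> y < n -> inverted x y ->
  backedge id x y = ~~ backedge qi x y.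
Proof.
move=> xn yn hi; have ht := E_tournament xn yn (inverted_neq hi).
move: hi; rewrite /inverted_by /backedge /= => /orP[] /andP[h1 h2].
  have -> : (y < x) = false by lia.
  have -> : (qi x < qi y) = false by lia.
  by rewrite h1 h2 ht /=; case: (E y x).
have -> : (x < y) = false by lia.
have -> : (qi y < qi x) = false by lia.
by rewrite h1 h2 /= ht; case: (E y x).
Qed.

Lemma uninverted_backedge x y : x < n -> y < n -> x != y -> ~~ inverted x y ->
  backedge id x y = backedge qi x y.
Proof.
move=> xn yn nxy hi.
have nq : qi x != qi y by apply: contra nxy => /eqP /(qi_inj xn yn) ->.
move: hi; rewrite /inverted_by /backedge /= negb_or !negb_and.
move: nxy nq; case: ltngtP => // h1 _; case: ltngtP => // h2 _ /= /andP[];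
  rewrite ?h1 ?h2 /=; lia.
Qed.

(* Each inverted partner of [x] uses up the backedge at [x] of one of the
   two orderings. *)
Lemma inverted_partners_backedge x y z : x < n -> y < n -> z < n -> y != z ->
  inverted x y -> inverted x z -> backedge id x y != backedge id x z.
Proof.
move=> xn yn zn dyz iy iz.
move: (inverted_backedge xn yn iy) (inverted_backedge xn zn iz).
case By: (backedge id x y); case Bz: (backedge id x z) => //=.
  by rewrite (backedge_id_uniq xn yn zn By Bz) eqxx in dyz.
move=> /esym /negbFE By' /esym /negbFE Bz'.
by rewrite (backedge_qi_uniq xn yn zn By' Bz') eqxx in dyz.
Qed.

Lemma no_three_inverted_partners x y1 y2 y3 : x < n -> y1 < n -> y2 < n -> y3 < n ->
  y1 != y2 -> y1 != y3 -> y2 != y3 ->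
  inverted x y1 -> inverted x y2 -> inverted x y3 -> False.
Proof.
move=> xn n1 n2 n3 d12 d13 d23 i1 i2 i3.
move: (inverted_partners_backedge xn n1 n2 d12 i1 i2)
  (inverted_partners_backedge xn n1 n3 d13 i1 i3)
  (inverted_partners_backedge xn n2 n3 d23 i2 i3).
by case: (backedge id x y1); case: (backedge id x y2); case: (backedge id x y3).
Qed.

Lemma no_inverted_triangle x y z : x < n -> y < n -> z < n ->
  inverted x y -> inverted x z -> inverted y z -> False.
Proof.
move=> xn yn zn ixy ixz iyz.
move: (inverted_partners_backedge xn yn zn (inverted_neq iyz) ixy ixz).
move: (inverted_partners_backedge yn xn zn (inverted_neq ixz) (etrans (invertedC _ _) ixy) iyz).
move: (inverted_partners_backedge zn xn yn (inverted_neq ixy)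
  (etrans (invertedC _ _) ixz) (etrans (invertedC _ _) iyz)).
rewrite (backedgeC _ y x) (backedgeC _ z x) (backedgeC _ z y).
by case: (backedge id x y); case: (backedge id x z); case: (backedge id y z).
Qed.

(* Such a backedge would belong to both orderings, while the partner [z]
   already uses up the backedge at [x] of one of them. *)
Lemma no_backedge_of_partner x y z : x < n -> y < n -> z < n -> x != y -> z != y ->
  ~~ inverted x y -> inverted x z -> ~~ backedge id x y.
Proof.
move=> xn yn zn nxy nzy ni iz; apply/negP => Bxy.
have Bxy' : backedge qi x y by rewrite -uninverted_backedge.
move: (inverted_backedge xn zn iz); case Bxz: (backedge id x z) => /esym.
  by rewrite (backedge_id_uniq xn zn yn Bxz Bxy) eqxx in nzy.
move=> /negbFE Bxz'.
by rewrite (backedge_qi_uniq xn zn yn Bxz' Bxy') eqxx in nzy.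
Qed.

Lemma E_backedge_lt x y : x < y -> y < n -> E x y = ~~ backedge id x y.
Proof. by move=> lt yn; rewrite E_backedge ?lt ?neq_ltn ?lt //; lia. Qed.

Lemma E_forward x y : x < y -> y < n -> ~~ backedge id x y -> E x y.
Proof. by move=> lt yn; rewrite E_backedge_lt. Qed.

Lemma qi_neq_lt c y : y < n -> c <= qi y -> q c != y -> c < qi y.
Proof.
move=> yn h1 h2; rewrite ltn_neqAle h1 andbT.
by apply: contra h2 => /eqP ->; rewrite qiK.
Qed.

Ltac inv_lia := unfold inverted_by; lia.

Section Block.
Variable b : nat.
Hypothesis q_prefix : forall k, k < b -> q k < b.
Hypothesis qi_prefix : forall y, y < b -> qi y < b.

Lemma q_ge_start k : b <= k -> k < n -> b <= q k.
Proof. move=> h1 h2; rewrite leqNgt; apply/negP => /qi_prefix; rewrite qK //; lia. Qed.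

Lemma qi_ge_start y : b <= y -> y < n -> b <= qi y.
Proof. move=> h1 h2; rewrite leqNgt; apply/negP => /q_prefix; rewrite qiK //; lia. Qed.

Definition is_block (K : skind) (m : nat) : Prop :=
  [/\ 0 < m, b + m <= n, tau_sized K m
    & forall r, r < m -> q (b + r) = b + block_off K m r].

(* The new positions [b, c) hold exactly the old positions [b, c] except [c - 1]. *)
Definition chain_inv (c : nat) : Prop :=
  (forall k, b <= k < c -> q k <= c /\ q k != c.-1) /\
  (forall y, b <= y <= c -> y != c.-1 -> qi y < c).

Definition chain_pat (s : bool) (c : nat) : Prop :=
  forall k, b <= k < c -> q k = b + chain_off s (k - b).

Section ChainStep.
Variables (s : bool) (c : nat).
Hypotheses (s_odd : s = odd (c - b)) (s_len : s || (2 <= c - b)).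
Hypotheses (bc : b < c) (cn : c < n) (Hinv : chain_inv c) (Hpat : chain_pat s c).

Lemma qi_unplaced y : b <= y -> y < n -> y = c.-1 \/ c < y -> c <= qi y.
Proof.
move=> h1 h2 h3; rewrite leqNgt; apply/negP => hc.
have [B /eqP A] := Hinv.1 (qi y) (introT andP (conj (qi_ge_start h1 h2) hc)).
rewrite qiK // in A B; case: h3 => [|lt]; [exact: A | lia].
Qed.

Lemma qi_pred_ge : c <= qi c.-1.
Proof. by apply: qi_unplaced; [lia | lia | left]. Qed.

Lemma q_chain_next : q c = c.-1 \/ c < q c.
Proof.
have xb : b <= q c by apply: q_ge_start; lia.
case: (eqVneq (q c) c.-1) => [|nl]; [by left | right].
rewrite ltnNge; apply/negP => xc.
by have := Hinv.2 (q c) (introT andP (conj xb xc)) nl; rewrite qK //; lia.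
Qed.

Lemma q_chain_succ : c.+1 < n -> q c.+1 != c.-1 -> c < q c.+1.
Proof.
move=> c1n nl; have yb : b <= q c.+1 by apply: q_ge_start; lia.
rewrite ltnNge; apply/negP => yc.
by have := Hinv.2 (q c.+1) (introT andP (conj yb yc)) nl; rewrite qK //; lia.
Qed.

Lemma chain_end1 : q c = c.-1 -> is_block (kind_of s) (c - b).+1.
Proof.
move=> xl; split => //; [lia | exact: tau_sized_kind_of |].
move=> r hr; rewrite (@block_off_chain_end1 _ (c - b)) //; try lia.
case: eqP => [->|ner]; first by rewrite subnKC ?xl //; lia.
by rewrite Hpat ?addKn //; lia.
Qed.

Lemma chain_end2 : q c = c.+1 -> is_block (kind_of s) (c - b).+2.
Proof.
move=> xc1; have c1n : c.+1 < n by rewrite -xc1 q_lt.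
have qic1 : qi c.+1 = c by rewrite -xc1 qK.
case: (eqVneq (q c.+1) c.-1) => [yl|ynl].
  split => //; [lia | exact: tau_sized_kind_of |].
  move=> r hr; rewrite (@block_off_chain_end2 _ (c - b)) //; try lia.
  case: eqP => [->|ner]; first by rewrite subnKC ?xc1 //; lia.
  case: eqP => [->|ner2].
    by rewrite (_ : b + (c - b).+1 = c.+1) ?yl; lia.
  by rewrite Hpat ?addKn //; lia.
exfalso; set y := q c.+1 in ynl.
have yn : y < n by apply: q_lt.
have qiy : qi y = c.+1 by rewrite qK.
have yx : y != c.+1 by rewrite -xc1; apply/eqP => /(q_inj c1n cn); lia.
have yc2 : c.+2 <= y by move: (q_chain_succ c1n ynl) yx; rewrite -/y; lia.
have qic : qi c < c by apply: Hinv.2; lia.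
have qil : c.+1 < qi c.-1.
  apply: qi_neq_lt; [lia | | exact: ynl].
  apply: qi_neq_lt; [lia | exact: qi_pred_ge | by rewrite xc1; apply/eqP; lia].
by apply: (@no_three_inverted_partners c.-1 c c.+1 y) => //; inv_lia.
Qed.

Lemma chain_far : c.+3 <= q c -> False.
Proof.
move=> xc3; have c2n : c.+2 < n by have := q_lt cn; lia.
have xn := q_lt cn; have qix : qi (q c) = c by rewrite qK.
have qi_gt y : b <= y -> y < n -> y = c.-1 \/ c < y -> y != q c -> c < qi y.
  by move=> *; apply: qi_neq_lt => //; [exact: qi_unplaced | rewrite eq_sym].
have g0 : c < qi c.-1 by apply: qi_gt; lia.
have g1 : c < qi c.+1 by apply: qi_gt; lia.
have g2 : c < qi c.+2 by apply: qi_gt; lia.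
by apply: (@no_three_inverted_partners (q c) c.-1 c.+1 c.+2) => //; try lia; inv_lia.
Qed.

Lemma chain_continue_back : q c = c.+2 -> q c.+1 = c.-1.
Proof.
move=> xc2; have c2n : c.+2 < n by rewrite -xc2 q_lt.
have qic2 : qi c.+2 = c by rewrite -xc2 qK.
have c1n : c.+1 < n by lia.
have yn := q_lt c1n; have qiy : qi (q c.+1) = c.+1 by rewrite qK.
case: (eqVneq (q c.+1) c.-1) => // ynl; exfalso.
have yc := q_chain_succ c1n ynl.
have yx : q c.+1 != c.+2 by rewrite -xc2; apply/eqP => /(q_inj c1n cn); lia.
have qil : c.+1 < qi c.-1.
  apply: qi_neq_lt; [lia | | exact: ynl].
  apply: qi_neq_lt; [lia | exact: qi_pred_ge | by rewrite xc2; apply/eqP; lia].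
case: (eqVneq (q c.+1) c.+1) => [yc1|yc1].
  have qic1 : qi c.+1 = c.+1 by rewrite -{1}yc1 qK.
  by apply: (@no_inverted_triangle c.-1 c.+1 c.+2) => //; try lia; inv_lia.
have qic : qi c < c by apply: Hinv.2; lia.
by apply: (@no_three_inverted_partners c.-1 c c.+2 (q c.+1)) => //; try lia; inv_lia.
Qed.

Lemma chain_continue : q c = c.+2 ->
  [/\ c.+2 < n, chain_inv c.+2 & chain_pat s c.+2].
Proof.
move=> xc2; have yl := chain_continue_back xc2.
have c2n : c.+2 < n by rewrite -xc2 q_lt.
have qic2 : qi c.+2 = c by rewrite -xc2 qK.
have qil : qi c.-1 = c.+1 by rewrite -yl qK; lia.
have [P1 P2] := chain_off_step s_odd s_len (ltac:(lia) : 1 <= c - b).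
split => //; [split|].
- move=> k /andP[bk kc]; case: (ltngtP k c) => hkc.
  + have [A B] := Hinv.1 k (introT andP (conj bk hkc)); split; first lia.
    by move: B => /eqP B; apply/eqP; lia.
  + by rewrite (_ : k = c.+1) ?yl; [split; [|apply/eqP]; lia | lia].
  + by rewrite hkc xc2; split; [|apply/eqP]; lia.
- move=> y /andP[yb yc] ny; case: (eqVneq y c.-1) => [->|n1]; first lia.
  case: (eqVneq y c) => [->|n2]; first by have := Hinv.2 c; lia.
  case: (eqVneq y c.+2) => [->|n3]; first lia.
  by have := Hinv.2 y (introT andP (conj yb _)) n1; lia.
- move=> k hk; case: (ltngtP k c) => hkc.
  + by apply: Hpat; lia.
  + by rewrite (_ : k = c.+1) ?yl -?addSnnS ?subSn ?P2; lia.
  + by rewrite hkc xc2 P1; lia.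
Qed.

End ChainStep.

Lemma chain_to_block s c : s = odd (c - b) -> s || (2 <= c - b) -> b < c -> c < n ->
  chain_inv c -> chain_pat s c -> exists m, is_block (kind_of s) m.
Proof.
have [k] := ubnP (n - c); elim: k c => // k IH c ck s_odd s_len bc cn Hinv Hpat.
have [xl|] := q_chain_next s_odd s_len bc cn Hinv Hpat.
  by eexists; exact: chain_end1 s_odd s_len bc cn Hinv Hpat xl.
case: (ltngtP (q c) c.+2) => [xc1 cx|xc3 _|xc2 _].
- by eexists; apply: (chain_end2 s_odd s_len bc cn Hinv Hpat); lia.
- by case: (chain_far s_odd s_len bc cn Hinv Hpat xc3).
have [c2n Hinv2 Hpat2] := chain_continue s_odd s_len bc cn Hinv Hpat xc2.
apply: (IH c.+2) => //; try lia.
Qed.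

Lemma qi_ge_avoid d y : b <= y -> y < n ->
  all (fun k => q k != y) (iota b d) -> b + d <= qi y.
Proof.
move=> h1 h2 /allP Hall; rewrite leqNgt; apply/negP => hc.
have : q (qi y) != y by apply: Hall; rewrite mem_iota; have := qi_ge_start h1 h2; lia.
by rewrite qiK ?eqxx.
Qed.

Section Start.
Hypothesis bn : b < n.

Lemma start_singleton : q b = b -> is_block KSig 1.
Proof. by move=> xb; split => // [|r]; [lia | case: r => // _; rewrite addn0 xb]. Qed.

Lemma start_far : b.+3 <= q b -> False.
Proof.
move=> xb; have x_lt := q_lt bn; have qix : qi (q b) = b by rewrite qK.
have qi_gt y : y < q b -> b <= y -> b + 1 <= qi y.
  by move=> *; apply: qi_ge_avoid => /=; lia.
have g0 : b + 1 <= qi b by apply: qi_gt; lia.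
have g1 : b + 1 <= qi b.+1 by apply: qi_gt; lia.
have g2 : b + 1 <= qi b.+2 by apply: qi_gt; lia.
by apply: (@no_three_inverted_partners (q b) b b.+1 b.+2) => //; try lia; inv_lia.
Qed.

Lemma start_sigma_inv : q b = b.+1 -> exists m, is_block KSigInv m.
Proof.
move=> xb; have b1n : b.+1 < n by rewrite -xb q_lt.
have qib1 : qi b.+1 = b by rewrite -xb qK.
apply: (@chain_to_block true b.+1); rewrite ?subSnn //.
- split=> [k hk|y hy ny]; first by rewrite (_ : k = b) ?xb; lia.
  by rewrite (_ : y = b.+1) //; lia.
- by move=> k hk; rewrite (_ : k = b) ?xb ?subnn /chain_off /=; lia.
Qed.

Lemma start_sigma : q b = b.+2 -> q b.+1 = b -> exists m, is_block KSig m.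
Proof.
move=> xb yb; have b2n : b.+2 < n by rewrite -xb q_lt.
have qib2 : qi b.+2 = b by rewrite -xb qK.
have qib : qi b = b.+1 by rewrite -yb qK; lia.
apply: (@chain_to_block false b.+2); try lia.
- split=> [k hk|y hy ny].
    have [->|->] : k = b \/ k = b.+1 by lia.
      by rewrite xb; lia.
    by rewrite yb; lia.
  have [->|->] : y = b \/ y = b.+2 by lia.
    by rewrite qib.
  by rewrite qib2.
- move=> k hk; have [->|->] : k = b \/ k = b.+1 by lia.
    by rewrite xb subnn /chain_off /=; lia.
  by rewrite yb subSnn /chain_off /=; lia.
Qed.

Lemma start_shift2_fixed : q b = b.+2 -> q b.+1 = b.+1 -> False.
Proof.
move=> xb yb; have b2n : b.+2 < n by rewrite -xb q_lt.
have qib2 : qi b.+2 = b by rewrite -xb qK.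
have qib1 : qi b.+1 = b.+1 by rewrite -{1}yb qK; lia.
have qib : b + 2 <= qi b by apply: qi_ge_avoid; rewrite /= ?xb ?yb; lia.
by apply: (@no_inverted_triangle b b.+1 b.+2) => //; try lia; inv_lia.
Qed.

Lemma start_shift2_far : q b = b.+2 -> b.+4 <= q b.+1 -> False.
Proof.
move=> xb yb; have b1n : b.+1 < n by have := q_lt bn; lia.
have y_lt := q_lt b1n; have qiy : qi (q b.+1) = b.+1 by rewrite qK.
have qi_gt z : z < q b.+1 -> z != b.+2 -> b <= z -> b + 2 <= qi z.
  by move=> *; apply: qi_ge_avoid; rewrite /= ?xb; lia.
have g0 : b + 2 <= qi b by apply: qi_gt; lia.
have g1 : b + 2 <= qi b.+1 by apply: qi_gt; lia.
have g3 : b + 2 <= qi b.+3 by apply: qi_gt; lia.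
by apply: (@no_three_inverted_partners (q b.+1) b b.+1 b.+3) => //; try lia; inv_lia.
Qed.

Section Tau.
Hypotheses (xb : q b = b.+2) (yb : q b.+1 = b.+3).

Lemma start_tau_third : q b.+2 = b.
Proof.
have b3n : b.+3 < n by rewrite -yb q_lt //; have := q_lt bn; lia.
have qib2 : qi b.+2 = b by rewrite -xb qK.
have qib3 : qi b.+3 = b.+1 by rewrite -yb qK; lia.
have zn : q b.+2 < n by apply: q_lt; lia.
have qiz : qi (q b.+2) = b.+2 by rewrite qK; lia.
have zb : b <= q b.+2 by apply: q_ge_start; lia.
have zx : q b.+2 != b.+2 by rewrite -xb; apply/eqP => /q_inj; lia.
have zy : q b.+2 != b.+3 by rewrite -yb; apply/eqP => /q_inj; lia.
have qib1 : b + 2 <= qi b.+1 by apply: qi_ge_avoid; rewrite /= ?xb ?yb; lia.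
case: (ltngtP (q b.+2) b.+1) => [zb0|zb4|zb1]; first lia.
  have qib1' : b + 3 <= qi b.+1 by apply: qi_ge_avoid; rewrite /= ?xb ?yb; lia.
  by case: (@no_three_inverted_partners b.+1 b.+2 b.+3 (q b.+2)) => //; try lia; inv_lia.
have qib : b + 3 <= qi b by apply: qi_ge_avoid; rewrite /= ?xb ?yb ?zb1; lia.
have qib1' : qi b.+1 = b.+2 by rewrite -{1}zb1 qK; lia.
by case: (@no_three_inverted_partners b.+1 b b.+2 b.+3) => //; try lia; inv_lia.
Qed.

Lemma start_tau : is_block KTau 4.
Proof.
have zb := start_tau_third.
have b3n : b.+3 < n by rewrite -yb q_lt //; have := q_lt bn; lia.
have wn : q b.+3 < n by apply: q_lt.
have qiw : qi (q b.+3) = b.+3 by rewrite qK.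
have wb : b <= q b.+3 by apply: q_ge_start; lia.
have w0 : q b.+3 != b by rewrite -zb; apply/eqP => /q_inj; lia.
have w2 : q b.+3 != b.+2 by rewrite -xb; apply/eqP => /q_inj; lia.
have w3 : q b.+3 != b.+3 by rewrite -yb; apply/eqP => /q_inj; lia.
case: (ltngtP (q b.+3) b.+1) => [wb0|wb4|wb1]; first lia.
  have qib1 : b + 4 <= qi b.+1 by apply: qi_ge_avoid; rewrite /= ?xb ?yb ?zb; lia.
  have qib2 : qi b.+2 = b by rewrite -xb qK.
  have qib3 : qi b.+3 = b.+1 by rewrite -yb qK; lia.
  by case: (@no_three_inverted_partners b.+1 b.+2 b.+3 (q b.+3)) => //; try lia; inv_lia.
split=> // [|r hr]; first lia.
rewrite /= /tau_off.
have [->|[->|[->|->]]] : r = 0 \/ r = 1 \/ r = 2 \/ r = 3 by lia.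
all: by rewrite ?addn0 ?addn1 ?addn2 ?addn3 ?xb ?yb ?zb ?wb1.
Qed.

End Tau.

(* [q b = b] gives a singleton, [q b = b+1] a sigma_X^-1 block, and
   [q b = b+2] a sigma_X or tau_X block according to [q (b+1)]; every other
   case produces three inverted partners or an inverted triangle. *)
Lemma block_start : exists K m, is_block K m.
Proof.
have xb : b <= q b by exact: q_ge_start.
case: (ltngtP (q b) b.+1) => [xb0|xb2|xb1].
- by exists KSig, 1; apply: start_singleton; lia.
- case: (ltngtP (q b) b.+2) => [xb1|xb3|{}xb2]; [lia | by case: start_far |].
  have b1n : b.+1 < n by have := q_lt bn; lia.
  have yb : b <= q b.+1 by apply: q_ge_start.
  have yx : q b.+1 != b.+2 by rewrite -xb2; apply/eqP => /q_inj; lia.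
  case: (ltngtP (q b.+1) b.+1) => [yb0|yb2|yb1].
  + by exists KSig; apply: start_sigma; lia.
  + case: (ltngtP (q b.+1) b.+3) => [|yb4|yb3]; first lia.
      by case: (start_shift2_far xb2).
    by exists KTau, 4; exact: start_tau.
  + by case: (start_shift2_fixed xb2 yb1).
- by exists KSigInv; exact: start_sigma_inv.
Qed.

End Start.

Definition nat_homogeneous (m : nat) : Prop :=
  forall y, y < n -> ~~ (b <= y < b + m) ->
    (forall x, b <= x < b + m -> E y x) \/ (forall x, b <= x < b + m -> E x y).

Definition transitive_along (g : nat -> nat) (m : nat) : Prop :=
  forall i j, i < j -> j < m -> E (b + g i) (b + g j).
Definition P_along (g : nat -> nat) (m : nat) : Prop :=
  forall i j, i < m -> j < m -> E (b + g i) (b + g j) = (i.+2 <= j) || (i == j.+1).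

Section BlockProps.
Variables (K : skind) (m : nat).
Hypothesis HB : is_block K m.

Lemma block_qi r : r < m -> qi (b + r) = b + block_off_inv K m r.
Proof.
case: HB => _ bm hK Hq rm; have fr := block_off_inv_lt hK rm.
by rewrite -{1}(block_off_invK hK rm) -Hq // qK //; lia.
Qed.

Lemma q_block_lt k : k < b + m -> q k < b + m.
Proof.
case: HB => _ _ hK Hq hk; case: (ltnP k b) => hb; first by have := q_prefix hb; lia.
by rewrite -(subnKC hb) Hq; [have := @block_off_lt K m (k - b) hK | ]; lia.
Qed.

Lemma qi_block_lt y : y < b + m -> qi y < b + m.
Proof.
case: HB => _ _ hK _ hy; case: (ltnP y b) => hb; first by have := qi_prefix hb; lia.
by rewrite -(subnKC hb) block_qi; [have := @block_off_inv_lt K m (y - b) hK | ]; lia.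
Qed.

Lemma qi_ge_block_end y : b + m <= y -> y < n -> b + m <= qi y.
Proof. by move=> h1 h2; rewrite leqNgt; apply/negP => /q_block_lt; rewrite qiK //; lia. Qed.

Lemma uninverted_outside x y : b <= x < b + m -> y < n -> ~~ (b <= y < b + m) ->
  ~~ inverted x y.
Proof.
case: HB => _ bm _ _ hx yn hy.
have qx1 : qi x < b + m by apply: qi_block_lt; lia.
have qx2 : b <= qi x by apply: qi_ge_start; lia.
case: (ltnP y b) => hyb; first by have := qi_prefix hyb; inv_lia.
by have := @qi_ge_block_end y; inv_lia.
Qed.

Lemma homogeneous_of_partners :
  (forall x, b <= x < b + m -> exists2 z, b <= z < b + m & inverted x z) ->
  nat_homogeneous m.
Proof.
case: HB => _ bm _ _ Hp y yn hy.
have nbk x : b <= x < b + m -> ~~ backedge id x y.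
  move=> hx; have [z hz iz] := Hp x hx.
  by apply: (no_backedge_of_partner _ _ _ _ _ (uninverted_outside hx yn hy) iz);
    try lia; apply: contraNneq hy => <-.
case: (ltnP y b) => hyb; [left | right] => x hx; apply: E_forward; try lia.
  by rewrite backedgeC nbk.
exact: nbk.
Qed.

Section Path.
Variable g : nat -> nat.
Hypothesis Hg : path_shape m g (block_off_inv K m).

Local Notation w i := (b + g i).

Lemma path_w_lt i : i < m -> w i < n.
Proof. by case: HB => _ bm _ _ /(path_lt Hg); lia. Qed.

Lemma path_w_inj i j : i < m -> j < m -> w i = w j -> i = j.
Proof. by move=> im jm /addnI eg; rewrite -(pathK Hg im) -(pathK Hg jm) eg. Qed.

Lemma path_inverted i : i.+1 < m -> inverted (w i) (w i.+1).
Proof.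
move=> h; have := path_adj Hg h.
by rewrite /inverted_by !block_qi ?ltn_add2l //; apply: (path_lt Hg); lia.
Qed.

Lemma path_far_uninverted i j : i.+2 <= j -> j < m -> ~~ inverted (w i) (w j) /\ w i < w j.
Proof.
move=> h1 h2; have [A B] := path_far Hg h1 h2.
rewrite /inverted_by !block_qi; try (apply: (path_lt Hg); lia).
by split; [rewrite !ltn_add2l; apply/negP => /orP[] /andP[]|]; lia.
Qed.

(* Consecutive edges of the path point in alternating directions with
   respect to the old ordering, so as edges of [E] they all agree. *)
Lemma path_E_step i : i.+2 < m -> E (w i.+1) (w i.+2) = E (w i) (w i.+1).
Proof.
move=> h; have i0 := @path_inverted i (ltnW h); have i1 := path_inverted h.
have wn k : k < m -> w k < n by apply: path_w_lt.
have ne k l : k < m -> l < m -> k != l -> w k != w l.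
  by move=> km lm; apply: contraNneq => /(path_w_inj km lm) ->.
rewrite !E_backedge ?wn ?ne //; try lia.
have d02 : w i != w i.+2 by apply: ne => //; lia.
have := inverted_partners_backedge (wn _ (ltnW h)) (wn _ (ltnW (ltnW h))) (wn _ h)
  d02 (etrans (invertedC _ _) i0) i1.
rewrite backedgeC !ltn_add2l (path_alt Hg h).
by case: (backedge _ _ _); case: (backedge _ _ _); case: (g i.+1 < g i.+2).
Qed.

Lemma path_E_adj i : i.+1 < m -> E (w i) (w i.+1) = E (w 0) (w 1).
Proof. by elim: i => [|i IH] h //; rewrite path_E_step // IH //; lia. Qed.

Lemma path_E_far i j : i.+2 <= j -> j < m -> E (w i) (w j).
Proof.
move=> h1 h2; have [ni lt] := path_far_uninverted h1 h2.
have ij := path_inverted (leq_trans h1 (ltnW h2)).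
apply: E_forward; rewrite ?path_w_lt //; try lia.
apply: (no_backedge_of_partner _ _ _ _ _ ni ij); rewrite ?path_w_lt //; try lia.
by apply/eqP => /(path_w_inj _ h2); lia.
Qed.

Lemma path_cond : transitive_along g m \/ P_along g m.
Proof.
have wn i : i < m -> w i < n by apply: path_w_lt.
case: (ltnP m 2) => hm; first by left => i j; lia.
case D0: (E (w 0) (w 1)); [left => i j h1 h2 | right => i j im jm].
  by case: (eqVneq j i.+1) => [->|ne]; [rewrite path_E_adj | apply: path_E_far]; lia.
case: (ltngtP i j) => h.
- case: (eqVneq j i.+1) => [ej|ne]; first by subst j; rewrite path_E_adj // D0; lia.
  by rewrite path_E_far //; lia.
- rewrite E_tournament ?wn //; last by apply/eqP => /(path_w_inj im jm); lia.
  case: (eqVneq i j.+1) => [ei|ne]; first by subst i; rewrite path_E_adj // D0; lia.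
  by rewrite path_E_far //; lia.
- by subst j; rewrite (negbTE (E_irrefl (wn _ im))); lia.
Qed.

Lemma path_partner : 1 < m ->
  forall x, b <= x < b + m -> exists2 z, b <= z < b + m & inverted x z.
Proof.
move=> hm x hx; set i := g (x - b).
have im : i < m by apply: (path_lt Hg); lia.
have xe : x = w i by rewrite /i (pathK Hg); lia.
case: (ltnP i.+1 m) => h.
  by exists (w i.+1); [have := path_lt Hg h; lia | rewrite xe; apply: path_inverted].
exists (w i.-1); first by have := @path_lt _ _ _ Hg i.-1 ltac:(lia); lia.
have := @path_inverted i.-1; rewrite prednK; last lia.
by rewrite xe invertedC; apply; lia.
Qed.

End Path.
End BlockProps.

Section TauBlock.
Hypothesis HB : is_block KTau 4.

Lemma tau_block_qi :
  [/\ qi b = b.+2, qi b.+1 = b.+3, qi b.+2 = b & qi b.+3 = b.+1].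
Proof.
have Q r : r < 4 -> qi (b + r) = b + tau_off r by move=> *; rewrite (block_qi HB).
have := Q 0 isT; have := Q 1 isT; have := Q 2 isT; have := Q 3 isT.
by rewrite /tau_off /= ?addn0 ?addn1 ?addn2 ?addn3.
Qed.

Lemma tau_block_forward : E b b.+1 /\ E b.+2 b.+3.
Proof.
have [q0 q1 q2 q3] := tau_block_qi; have [_ bn _ _] := HB.
have fwd x y z : x < y -> y < n -> z < n -> z != y ->
    ~~ inverted x y -> inverted x z -> E x y.
  move=> xy yn zn zy ni iz; apply: E_forward => //; try lia.
  by apply: (no_backedge_of_partner _ yn zn _ zy ni iz); [lia | apply/eqP; lia].
by split; [apply: (fwd _ _ b.+2) | apply: (fwd _ _ b)]; try lia; inv_lia.
Qed.

(* The four inverted pairs form the 4-cycle [b -- b+2 -- b+1 -- b+3 -- b];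
   going around it, the backedges alternate between the two orderings. *)
Lemma tau_block_cross : exists s : bool,
  [/\ E b b.+2 = ~~ s, E b b.+3 = s, E b.+1 b.+2 = s & E b.+1 b.+3 = ~~ s].
Proof.
have [q0 q1 q2 q3] := tau_block_qi; have [_ bn _ _] := HB.
have [n0 n1 n2 n3] : [/\ b < n, b.+1 < n, b.+2 < n & b.+3 < n] by split; lia.
have [l02 l03 l12 l13] : [/\ b < b.+2, b < b.+3, b.+1 < b.+2 & b.+1 < b.+3].
  by split; lia.
have [i02 i03] : inverted b b.+2 /\ inverted b b.+3 by split; inv_lia.
have [i12 i13] : inverted b.+1 b.+2 /\ inverted b.+1 b.+3 by split; inv_lia.
have [i20 i21] : inverted b.+2 b /\ inverted b.+2 b.+1 by split; inv_lia.
have d0 := inverted_partners_backedge n0 n2 n3 (negbT (ltn_eqF (ltnSn _))) i02 i03.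
have d1 := inverted_partners_backedge n1 n2 n3 (negbT (ltn_eqF (ltnSn _))) i12 i13.
have d2 := inverted_partners_backedge n2 n0 n1 (negbT (ltn_eqF (ltnSn _))) i20 i21.
rewrite (backedgeC _ b.+2 b) (backedgeC _ b.+2 b.+1) in d2.
exists (backedge id b b.+2); rewrite !E_backedge_lt //.
by move: d0 d1 d2; case: (backedge id b b.+2); case: (backedge id b b.+3);
  case: (backedge id b.+1 b.+2); case: (backedge id b.+1 b.+3).
Qed.

Lemma tau_block_cond : P_along (swap2 4) 4 \/ P_along swap21_inv 4.
Proof.
have [_ bn _ _] := HB.
have [n0 n1 n2 n3] : [/\ b < n, b.+1 < n, b.+2 < n & b.+3 < n] by split; lia.
have rev x y : x < y -> y < n -> E y x = ~~ E x y.
  by move=> *; apply: E_tournament; [lia | lia | apply/eqP; lia].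
have r10 := rev _ _ (ltnSn b) n1.
have r20 := rev _ _ (leqnSn b.+1) n2.
have r30 := rev _ _ (leqW (leqnSn b.+1)) n3.
have r21 := rev _ _ (ltnSn b.+1) n2.
have r31 := rev _ _ (leqnSn b.+2) n3.
have r32 := rev _ _ (ltnSn b.+2) n3.
have irr x : x < n -> E x x = false by move/E_irrefl/negbTE.
move: (irr _ n0) (irr _ n1) (irr _ n2) (irr _ n3) => z0 z1 z2 z3.
have [e01 e23] := tau_block_forward.
have [s [e02 e03 e12 e13]] := tau_block_cross.
case: s e02 e03 e12 e13 => /= e02 e03 e12 e13; [left | right] => i j hi hj;
  (case: i hi => [|[|[|[|i]]]] hi //); (case: j hj => [|[|[|[|j]]]] hj //);
  rewrite /= ?addn0 ?addn1 ?addn2 ?addn3;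
  by rewrite ?r10 ?r20 ?r30 ?r21 ?r31 ?r32 ?e01 ?e23 ?e02 ?e03 ?e12 ?e13 ?z0 ?z1 ?z2 ?z3.
Qed.

Lemma tau_block_partner :
  forall x, b <= x < b + 4 -> exists2 z, b <= z < b + 4 & inverted x z.
Proof.
have [q0 q1 q2 q3] := tau_block_qi.
move=> x hx; case: (ltnP x b.+2) => h.
  by exists b.+2; [lia | have [->|->] : x = b \/ x = b.+1 by lia]; inv_lia.
by exists b; [lia | have [->|->] : x = b.+2 \/ x = b.+3 by lia]; inv_lia.
Qed.

End TauBlock.

Definition block_shape_cond (K : skind) (m : nat) : Prop :=
  match K with
  | KSig => transitive_along (swap2 m) m \/ P_along (swap2 m) m
  | KSigInv => transitive_along (swap1 m) m \/ P_along (swap1 m) m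
  | KTau => m = 4 /\ (P_along (swap2 4) 4 \/ P_along swap21_inv 4)
  end.

Lemma is_block_shape K m : is_block K m -> block_shape_cond K m.
Proof.
case: K => HB /=.
- exact: (path_cond HB (swap2_path_shape m)).
- exact: (path_cond HB (swap1_path_shape m)).
- have [_ _ m4 _] := HB; move: HB; rewrite (m4 erefl) => HB.
  by split => //; exact: tau_block_cond.
Qed.

Lemma is_block_homogeneous K m : is_block K m -> nat_homogeneous m.
Proof.
move=> HB; have [m0 bm hK _] := HB.
case: (ltnP m 2) => hm.
  move=> y yn hy; have bn : b < n by lia.
  have nby : b != y by apply: contraNneq hy => <-; lia.
  case Eyb: (E y b); [left | right] => x hx; rewrite (_ : x = b) //; try lia.
  by rewrite E_tournament // Eyb.
apply: (homogeneous_of_partners HB); case: K HB hK => HB hK.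
- exact: (path_partner HB (swap2_path_shape m)).
- exact: (path_partner HB (swap1_path_shape m)).
- by move: HB; rewrite (hK erefl) => HB; exact: tau_block_partner.
Qed.

End Block.
Definition block_fold (bl : seq block) : nat -> nat :=
  foldr (fun B f => block_fun B \o f) id bl.

Lemma block_decomposition b : b <= n ->
  (forall k, k < b -> q k < b) -> (forall y, y < b -> qi y < b) ->
  exists bl : seq block,
  [/\ forall B, List.In B bl -> [/\ b <= bstart B, 0 < bsize B,
        bstart B + bsize B <= n & tau_sized (bkind B) (bsize B)],
      forall x, count (in_block^~ x) bl = (b <= x < n),
      forall x, b <= x < n -> q x = block_fold bl x,
      forall x, x < b -> block_fold bl x = x
    & forall B, List.In B bl -> nat_homogeneous (bstart B) (bsize B) /\
        block_shape_cond (bstart B) (bkind B) (bsize B)].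
Proof.
have [k] := ubnP (n - b); elim: k b => // k IH b nbk bn Hq Hqi.
case: (ltnP b n) => [{}bn|nb]; last first.
  by exists [::]; split => //= x; lia.
have [K [m HB]] := block_start Hq Hqi bn; have [m0 bm hK Hblk] := HB.
have [rest [R1 R2 R3 R4 R5]] :=
  IH (b + m) ltac:(lia) bm (q_block_lt Hq Hqi HB) (qi_block_lt Hq Hqi HB).
have out x : ~~ (b <= x < b + m) -> block_fun (Block b m K) x = x.
  exact: (@block_fun_out (Block b m K)) hK.
exists (Block b m K :: rest); split => /=.
- move=> B [<-|/R1 [*]]; split => //; lia.
- by move=> x; rewrite R2 /in_block /=; case: (boolP (b <= x)); case: (ltnP x (b + m));
    case: (ltnP x n) => //=; lia.
- move=> x hx; case: (ltnP x (b + m)) => h.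
    rewrite R4 // block_fun_in /in_block //=; last lia.
    by rewrite -{1}(subnKC (_ : b <= x)) ?Hblk //; lia.
  rewrite -R3 ?out //; last lia.
  by have := q_ge_start (q_block_lt Hq Hqi HB) (qi_block_lt Hq Hqi HB) h (proj2 (andP hx)); lia.
- by move=> x hx; rewrite R4 ?out //; lia.
- move=> B [<-|/R5 //]; split; [exact: is_block_homogeneous HB | exact: is_block_shape HB].
Qed.

End Inversions.

Section Transfer.
Variables (T : finType) (e : rel T) (n : nat) (v : 'I_n.+1 -> T) (pi : {perm 'I_n.+1}).
Hypothesis Ht : tournament e.
Hypothesis Mv : matching_ordering e v.
Hypothesis Mpi : matching_ordering e (fun i => v (pi i)).

(* Vertices are replaced by their positions in [v]; [qpos] is [pi] on
   positions, extended by the identity outside [0, n]. *)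
Definition Epos (x y : nat) : bool := e (v (inord x)) (v (inord y)).
Definition qpos (k : nat) : nat := if k < n.+1 then nat_of_ord (pi (inord k)) else k.
Definition qipos (y : nat) : nat := if y < n.+1 then nat_of_ord ((pi^-1)%g (inord y)) else y.

Lemma v_inj : injective v.
Proof. by case: Mv => [[g vK _] _]; exact: can_inj vK. Qed.

Lemma inord_inj x y : x < n.+1 -> y < n.+1 -> inord x = inord y :> 'I_n.+1 -> x = y.
Proof. by move=> xn yn /(congr1 (@nat_of_ord _)); rewrite !inordK. Qed.

Lemma qpos_lt k : k < n.+1 -> qpos k < n.+1.
Proof. by move=> kn; rewrite /qpos kn ltn_ord. Qed.

Lemma qipos_lt y : y < n.+1 -> qipos y < n.+1.
Proof. by move=> yn; rewrite /qipos yn ltn_ord. Qed.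

Lemma qiposK y : y < n.+1 -> qpos (qipos y) = y.
Proof. by move=> yn; rewrite /qpos /qipos yn ltn_ord inord_val permKV inordK. Qed.

Lemma qposK k : k < n.+1 -> qipos (qpos k) = k.
Proof. by move=> kn; rewrite /qpos /qipos kn ltn_ord inord_val permK inordK. Qed.

Lemma pi_qipos y : y < n.+1 -> pi (inord (qipos y)) = inord y.
Proof. by move=> yn; rewrite /qipos yn inord_val permKV. Qed.

Lemma Epos_tournament x y : x < n.+1 -> y < n.+1 -> x != y -> Epos x y = ~~ Epos y x.
Proof.
case: Ht => _ [_ Htour] xn yn nxy; rewrite /Epos.
have : v (inord x) != v (inord y).
  by apply: contra nxy => /eqP /v_inj /(inord_inj xn yn) ->.
by move/Htour; case: (e _ _); case: (e _ _).
Qed.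

Lemma Epos_irrefl x : ~~ Epos x x.
Proof. by case: Ht => _ [irr _]; apply: irr. Qed.

Lemma backedge_id_uniq x y z : x < n.+1 -> y < n.+1 -> z < n.+1 ->
  backedge Epos id x y -> backedge Epos id x z -> y = z.
Proof.
move=> xn yn zn By Bz; have /card_le1_eqP H := Mv.2 (inord x).
by apply: (inord_inj yn zn); apply: H; rewrite inE !inordK.
Qed.

Lemma backedge_qipos_uniq x y z : x < n.+1 -> y < n.+1 -> z < n.+1 ->
  backedge Epos qipos x y -> backedge Epos qipos x z -> y = z.
Proof.
move=> xn yn zn By Bz; have /card_le1_eqP H := Mpi.2 (inord (qipos x)).
have : inord (qipos y) = inord (qipos z) :> 'I_n.+1.
  by apply: H; rewrite inE !inordK ?qipos_lt // !pi_qipos.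
by move/(inord_inj (qipos_lt yn) (qipos_lt zn))/(congr1 qpos); rewrite !qiposK.
Qed.

Lemma block_ordering b m K (g h : nat -> nat) : b + m <= n.+1 ->
  (forall k, k < m -> [/\ g k < m, h k < m, g (h k) = k & h (g k) = k]) ->
  exists u : 'I_m -> T,
    [/\ ordering_of (block_set v (Block b m K)) u,
        forall i j : 'I_m, e (u i) (u j) = Epos (b + g i) (b + g j)
      & forall k, k < m -> at_ v (b + k) = at_ u (h k)].
Proof.
move=> bm Hg; exists (fun k : 'I_m => v (inord (b + g k))); split => //.
- split.
    move=> i j /v_inj /(congr1 (@nat_of_ord _)); have [gi _ _ hgi] := Hg i (ltn_ord i).
    have [gj _ _ hgj] := Hg j (ltn_ord j).
    by rewrite !inordK; try lia; move/addnI => eg; apply: val_inj; rewrite /= -hgi -hgj eg.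
  apply/setP => t; apply/imsetP/imsetP => [[k _ ->]|[j]].
    exists (inord (b + g k)) => //; have [gk _ _ _] := Hg k (ltn_ord k).
    by rewrite inE /in_block /= inordK; lia.
  rewrite inE /in_block /= => hj ->; have [_ hk ghk _] := Hg (j - b) ltac:(lia).
  exists (Ordinal hk) => //=; congr v; apply: val_inj => /=; rewrite ghk inordK; lia.
- move=> k km; have [_ hk ghk _] := Hg k km.
  rewrite /at_ !insubT; try lia.
  by move=> p1 /=; congr (Some (v _)); apply: val_inj => /=; rewrite ghk inordK //; lia.
Qed.

Lemma block_cond_of_shape b m K : b + m <= n.+1 ->
  block_shape_cond Epos b K m -> block_cond e v (Block b m K).
Proof.
move=> bm; have involution g : (forall k, k < m -> g k < m /\ g (g k) = k) ->
    forall k, k < m -> [/\ g k < m, g k < m, g (g k) = k & g (g k) = k].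
  by move=> Hg k /Hg [].
have swap1_inv := involution _ (fun k km => conj (swap1_lt km) (swap1K km)).
have swap2_inv := involution _ (fun k km => conj (swap2_lt km) (swap2K km)).
rewrite /block_cond /=; case: K => /=.
- have [u [ou Eu au]] := block_ordering KSig bm swap2_inv.
  by case=> C; exists u; split=> //; split=> //; [left | right] => i j *; rewrite Eu C.
- have [u [ou Eu au]] := block_ordering KSigInv bm swap1_inv.
  by case=> C; exists u; split=> //; split=> //; [left | right] => i j *; rewrite Eu C.
- case=> m4 C; subst m; split => //; case: C => C.
    have [u [ou Eu au]] := block_ordering KTau bm swap2_inv.
    by exists u; split=> //; split; [move=> i j; rewrite Eu C | left].
  have [u [ou Eu au]] := block_ordering KTau bm swap21_bij.
  by exists u; split=> //; split; [move=> i j; rewrite Eu C | right].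
Qed.

Lemma homogeneous_of_nat b m K :
  nat_homogeneous n.+1 Epos b m -> homogeneous e (block_set v (Block b m K)).
Proof.
case: Mv => [[g vK gK] _] Hh y ny.
have nb : ~~ (b <= g y < b + m).
  by apply: contra ny => hb; rewrite -[y]gK; apply: imset_f; rewrite inE /in_block.
have Ev (i j : 'I_n.+1) : Epos i j = e (v i) (v j) by rewrite /Epos !inord_val.
have [L|R] := Hh (g y) (ltn_ord _) nb; [left | right] => x /imsetP [j];
  rewrite inE /in_block /= => hj ->; [move: (L j hj) | move: (R j hj)];
  by rewrite Ev gK.
Qed.

Lemma block_decomposition_ord : exists blocks : seq block,
    (forall B, List.In B blocks -> 0 < bsize B /\ bstart B + bsize B <= n.+1) /\
    (forall x, x < n.+1 -> count (fun B => in_block B x) blocks = 1) /\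
    (forall x : 'I_n.+1,
        val (pi x) = foldr (fun B f => block_fun B \o f) id blocks (val x)) /\
    (forall B, List.In B blocks -> homogeneous e (block_set v B)) /\
    (forall B, List.In B blocks -> block_cond e v B).
Proof.
have [bl [R1 R2 R3 _ R5]] := block_decomposition qpos_lt qipos_lt qiposK qposK
  Epos_tournament (fun x _ => Epos_irrefl x) backedge_id_uniq backedge_qipos_uniq
  (leq0n n.+1) (fun k (k0 : k < 0) => k0) (fun y (y0 : y < 0) => y0).
exists bl; split; [|split; [|split; [|split]]].
- by move=> B /R1 [].
- by move=> x xn; rewrite R2 xn.
- move=> x; rewrite -[RHS]/(block_fold bl x) -R3 ?ltn_ord //.
  by rewrite /qpos ltn_ord inord_val.
- by move=> [b m K] /R5 [hom _]; exact: homogeneous_of_nat.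
- by move=> [b m K] iB; have [_ _ bm _] := R1 _ iB; have [_] := R5 _ iB; exact: block_cond_of_shape.
Qed.

End Transfer.

Theorem theorem5p4 (T : finType) (e : rel T) (n : nat) (v : 'I_n -> T)
    (pi : {perm 'I_n}) :
  tournament e ->
  matching_ordering e v ->
  matching_ordering e (fun i => v (pi i)) ->
  exists blocks : seq block,
    (forall B, List.In B blocks -> 0 < bsize B /\ bstart B + bsize B <= n) /\
    (forall x, x < n -> count (fun B => in_block B x) blocks = 1) /\
    (forall x : 'I_n,
        val (pi x) = foldr (fun B f => block_fun B \o f) id blocks (val x)) /\
    (forall B, List.In B blocks -> homogeneous e (block_set v B)) /\
    (forall B, List.In B blocks -> block_cond e v B).
Proof.
case: n v pi => [|n] v pi Ht Mv Mpi; last exact: block_decomposition_ord.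
by case: Ht => /card_gt0P [t _] _; case: Mv => [[g _ _] _]; case: (g t).
Qed.
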